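(* Let $A$ be a uniform Kan complex, $\pi:B\to A^{\mathrm{I}}$ a uniform Kan fibration, and $b:A\to B$ a map with $\pi\circ b=r$, where $r:A\to A^{\mathrm{I}}$ is the constant-path map. Then there is a map $j:A^{\mathrm{I}}\to B$ with $\pi\circ j=1_{A^{\mathrm{I}}}$.
   Context: Let $\mathbb{B}$ be the category of finite sets $[n]=\{\bot,x_1,\dots,x_n,\top\}$ ($n\ge0$, $\bot\ne\top$) and functions preserving $\bot,\top$; cartesian cubical sets are presheaves on $\mathbb{B}^{op}$. $\mathrm{I}^n$ is the representable on $[n]$, $\mathrm{I}^n\cong\mathrm{I}\times\dots\times\mathrm{I}$, $\mathrm{I}=\mathrm{I}^1$, $\mathrm{I}^0=1$; the two maps $[1]\to[0]$ give endpoints $0,1:1\to\mathrm{I}$. $A^{\mathrm{I}}$ is the exponential and $r:A\to A^{\mathrm{I}}$ is induced by $\mathrm{I}\to1$. For $1\le i\le n$, $d\in\{0,1\}$, the face $\alpha_i^d:\mathrm{I}^{n-1}\to\mathrm{I}^n$ inserts $d$ in coordinate $i$; for $e\in\{0,1\}$ the open box $\sqcup^n_e\rightarrowtail\mathrm{I}^n$ is the union of the images of all faces $\alpha_i^d$ with $(i,d)\ne(1,e)$, with inclusion $i^n_e$. A uniform Kan fibration structure on $f:Y\to X$ consists of, for each $n\ge1$, $e\in\{0,1\}$, $k\ge1$ and each commutative square $b':\mathrm{I}^k\times\sqcup^n_e\to Y$, $a:\mathrm{I}^k\times\mathrm{I}^n\to X$ with $fb'=a(1\times i^n_e)$, a chosen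 filler $\phi(a,b'):\mathrm{I}^k\times\mathrm{I}^n\to Y$ with $\phi(a,b')(1\times i^n_e)=b'$ and $f\phi(a,b')=a$, such that $\phi(a,b')\circ(\alpha\times1)=\phi(a(\alpha\times1),b'(\alpha\times1))$ for all $\alpha:\mathrm{I}^j\to\mathrm{I}^k$ ($j\ge1$). A uniform Kan complex is a cubical set $A$ with a uniform Kan fibration structure on $A\to1$. *)

From Stdlib Require Import FunctionalExtensionality ProofIrrelevance.
From mathcomp Require Import all_boot.
Set Implicit Arguments. Unset Strict Implicit. Unset Printing Implicit Defensive.

(* The object [n] = {bot, x_1, ..., x_n, top} is represented by 'I_n.+2:
   bot = 0, x_i = i, top = n+1. *)
Definition Bprop n m (f : {ffun 'I_n.+2 -> 'I_m.+2}) : bool :=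
  (f ord0 == ord0) && (f ord_max == ord_max).
Definition Bmor (n m : nat) := {f : {ffun 'I_n.+2 -> 'I_m.+2} | Bprop f}.

Lemma idB_proof n : Bprop [ffun x : 'I_n.+2 => x].
Proof. by rewrite /Bprop !ffunE !eqxx. Qed.
Definition idB n : Bmor n n := @exist _ (@Bprop n n) _ (idB_proof n).

Lemma compB_proof n m p (g : Bmor m p) (f : Bmor n m) :
  Bprop [ffun x => sval g (sval f x)].
Proof.
case: g f => [g /andP[/eqP g0 /eqP g1]] [f /andP[/eqP f0 /eqP f1]] /=.
by rewrite /Bprop !ffunE f0 f1 g0 g1 !eqxx.
Qed.
Definition compB n m p (g : Bmor m p) (f : Bmor n m) : Bmor n p :=
  @exist _ (@Bprop n p) _ (compB_proof g f).


Lemma compB_id_l n m (f : Bmor n m) : compB (idB m) f = f.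
Proof. by apply: val_inj; apply/ffunP => x; rewrite /= !ffunE. Qed.
Lemma compB_id_r n m (f : Bmor n m) : compB f (idB n) = f.
Proof. by apply: val_inj; apply/ffunP => x; rewrite /= !ffunE. Qed.
Lemma compB_assoc n m p q (h : Bmor p q) (g : Bmor m p) (f : Bmor n m) :
  compB h (compB g f) = compB (compB h g) f.
Proof. by apply: val_inj; apply/ffunP => x; rewrite /= !ffunE. Qed.

(* The B-map [n+1] -> [n] corresponding to the face alpha_{j+1}^d : I^n -> I^{n+1}:
   it sends x_{j+1} to bot (d = false, i.e. 0) or top (d = true, i.e. 1),
   x_i to x_i for i < j+1 and x_i to x_{i-1} for i > j+1. *)
Definition faceF n (j : 'I_n.+1) (d : bool) : {ffun 'I_n.+3 -> 'I_n.+2} :=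
  [ffun k : 'I_n.+3 => if (k : nat) == j.+1 then (if d then ord_max else ord0)
                      else if (k : nat) < j.+1 then inord k else inord k.-1].

Lemma faceB_proof n (j : 'I_n.+1) (d : bool) : Bprop (faceF j d).
Proof.
have hj := ltn_ord j.
rewrite /Bprop /faceF !ffunE /=; apply/andP; split; apply/eqP/val_inj => /=.
  by rewrite inordK.
have -> : (n.+2 == j.+1) = false.
  by apply/negbTE; rewrite eqSS; apply/eqP => E; move: hj; rewrite -E ltnn.
have -> : (n.+2 < j.+1) = false.
  by apply/negbTE; rewrite -leqNgt; exact: leq_trans hj (leqnSn _).
by rewrite inordK.
Qed.
Definition faceB n (j : 'I_n.+1) (d : bool) : Bmor n.+1 n := @exist _ (@Bprop n.+1 n) _ (faceB_proof j d).

Record cset := CSet {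
  ob : nat -> Type;
  act : forall n m, Bmor n m -> ob n -> ob m;
  act_id : forall n (x : ob n), act (idB n) x = x;
  act_comp : forall n m p (g : Bmor m p) (f : Bmor n m) (x : ob n),
      act (compB g f) x = act g (act f x)
}.

Record cmap (X Y : cset) := CMap {
  cf :> forall n, ob X n -> ob Y n;
  cnat : forall n m (f : Bmor n m) (x : ob X n), cf (act f x) = act f (cf x)
}.

Lemma cmap_ext X Y (p q : cmap X Y) : (forall n x, p n x = q n x) -> p = q.
Proof.
case: p q => [p pn] [q qn] /= H.
have E : p = q by apply: functional_extensionality_dep => n;
  apply: functional_extensionality => x; apply: H.
subst q; f_equal; apply: proof_irrelevance.
Qed.

Definition eqm X Y (p q : cmap X Y) := forall n x, p n x = q n x.

Definition idm X : cmap X X := @CMap X X (fun n x => x) (fun n m f x => erefl).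

Lemma compm_nat X Y Z (g : cmap Y Z) (f : cmap X Y) n m (h : Bmor n m) (x : ob X n) :
  g m (f m (act h x)) = act h (g n (f n x)).
Proof. by rewrite cnat cnat. Qed.
Definition compm X Y Z (g : cmap Y Z) (f : cmap X Y) : cmap X Z :=
  CMap (compm_nat g f).

Definition Term : cset :=
  @CSet (fun _ => unit) (fun _ _ _ x => x) (fun _ _ => erefl) (fun _ _ _ _ _ _ => erefl).
Definition toTerm X : cmap X Term := @CMap X Term (fun _ _ => tt) (fun _ _ _ _ => erefl).

Definition Prod (X Y : cset) : cset :=
  @CSet (fun n => (ob X n * ob Y n)%type)
        (fun n m f x => (act f x.1, act f x.2))
        (fun n x => ltac:(by case: x => a b; rewrite /= !act_id))
        (fun n m p g f x => ltac:(by case: x => a b; rewrite /= !act_comp)).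

Lemma prodmap_nat X X' Y Y' (p : cmap X X') (q : cmap Y Y') n m (f : Bmor n m)
  (x : ob (Prod X Y) n) :
  (p m (act f x).1, q m (act f x).2) = act (c:=Prod X' Y') f (p n x.1, q n x.2).
Proof. by case: x => a b /=; rewrite !cnat. Qed.
Definition prodmap X X' Y Y' (p : cmap X X') (q : cmap Y Y') : cmap (Prod X Y) (Prod X' Y') :=
  @CMap (Prod X Y) (Prod X' Y') (fun n x => (p n x.1, q n x.2)) (prodmap_nat p q).

(* representable I^n = B([n], -) *)
Definition Rep (n : nat) : cset :=
  @CSet (fun m => Bmor n m) (fun m p g h => compB g h)
        (fun m h => compB_id_l h)
        (fun m p q g f h => esym (compB_assoc g f h)).

Definition Int : cset := Rep 1.

(* open box in I^{n+1}: union of the images of all faces alpha_{j+1}^d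
   with (j+1, d) <> (1, e).  The image of alpha_{j+1}^d at level m consists of
   those f : [n+1] -> [m] of the form h o faceB j d. *)
Definition boxb n (e : bool) m (f : Bmor n.+1 m) : bool :=
  [exists j : 'I_n.+1, exists d : bool,
     ((j != ord0) || (d != e)) && [exists h : Bmor n m, f == compB h (faceB j d)]].

Lemma boxb_act n e m p (g : Bmor m p) (f : Bmor n.+1 m) :
  boxb e f -> boxb e (compB g f).
Proof.
case/existsP=> j /existsP [d /andP [Hjd /existsP [h /eqP Hh]]].
apply/existsP; exists j; apply/existsP; exists d; rewrite Hjd /=.
by apply/existsP; exists (compB g h); rewrite Hh compB_assoc.
Qed.

Definition Box_act n e m p (g : Bmor m p) (f : {f : Bmor n.+1 m | boxb e f}) :
  {f : Bmor n.+1 p | boxb e f} := @exist _ (@boxb n e p) _ (boxb_act g (svalP f)).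

Lemma Box_act_id n e m (f : {f : Bmor n.+1 m | boxb e f}) : Box_act (idB m) f = f.
Proof. by apply: val_inj; rewrite /= compB_id_l. Qed.
Lemma Box_act_comp n e m p q (g : Bmor p q) (g' : Bmor m p) (f : {f : Bmor n.+1 m | boxb e f}) :
  Box_act (compB g g') f = Box_act g (Box_act g' f).
Proof. by apply: val_inj; rewrite /= compB_assoc. Qed.

Definition Box n (e : bool) : cset :=
  @CSet (fun m => {f : Bmor n.+1 m | boxb e f}) (@Box_act n e)
        (@Box_act_id n e) (@Box_act_comp n e).

Definition boxincl n e : cmap (Box n e) (Rep n.+1) :=
  @CMap (Box n e) (Rep n.+1) (fun m f => sval f) (fun _ _ _ _ => erefl).

(* (A^I)(m) = Hom(I^m x I, A); the action of g : [m] -> [m'] precomposes with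
   (g^* x 1) where g^* : I^{m'} -> I^m is h |-> h o g. *)
Definition precomp m m' (g : Bmor m m') : cmap (Rep m') (Rep m) :=
  @CMap (Rep m') (Rep m) (fun p h => compB h g)
        (fun p q f h => esym (compB_assoc f h g)).

Definition Exp_act (A : cset) m m' (g : Bmor m m') (phi : cmap (Prod (Rep m) Int) A) :
  cmap (Prod (Rep m') Int) A := compm phi (prodmap (precomp g) (idm Int)).

Lemma Exp_act_id A m (phi : cmap (Prod (Rep m) Int) A) : Exp_act (idB m) phi = phi.
Proof. by apply: cmap_ext => n [h t] /=; rewrite compB_id_r. Qed.
Lemma Exp_act_comp A m m' m'' (g : Bmor m' m'') (f : Bmor m m')
  (phi : cmap (Prod (Rep m) Int) A) :
  Exp_act (compB g f) phi = Exp_act g (Exp_act f phi).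
Proof. by apply: cmap_ext => n [h t] /=; rewrite compB_assoc. Qed.

Definition Exp (A : cset) : cset :=
  @CSet (fun m => cmap (Prod (Rep m) Int) A) (@Exp_act A)
        (@Exp_act_id A) (@Exp_act_comp A).

(* r : A -> A^I, induced by I -> 1: a in A(m) |-> ((h, t) |-> A(h)(a)) *)
Definition r_elt (A : cset) m (a : ob A m) : cmap (Prod (Rep m) Int) A :=
  @CMap (Prod (Rep m) Int) A (fun p x => act x.1 a)
        (fun p q f x => act_comp f x.1 a).

Lemma r_nat (A : cset) m m' (g : Bmor m m') (a : ob A m) :
  r_elt (act g a) = act (c:=Exp A) g (r_elt a).
Proof. by apply: cmap_ext => n [h t] /=; rewrite act_comp. Qed.

Definition r (A : cset) : cmap A (Exp A) := @CMap A (Exp A) (@r_elt A) (@r_nat A).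

Definition sq_comm (X Y : cset) (f : cmap Y X) n k e
  (a : cmap (Prod (Rep k.+1) (Rep n.+1)) X) (b' : cmap (Prod (Rep k.+1) (Box n e)) Y) :=
  eqm (compm f b') (compm a (prodmap (idm (Rep k.+1)) (boxincl n e))).

Lemma sq_comm_pre X Y (f : cmap Y X) n k e a b' j (al : cmap (Rep j.+1) (Rep k.+1)) :
  @sq_comm X Y f n k e a b' ->
  @sq_comm X Y f n j e (compm a (prodmap al (idm _))) (compm b' (prodmap al (idm _))).
Proof. by move=> H m [x y]; apply: H. Qed.

Record ukan_fib (X Y : cset) (f : cmap Y X) := UKan {
  fill : forall n k e (a : cmap (Prod (Rep k.+1) (Rep n.+1)) X)
           (b' : cmap (Prod (Rep k.+1) (Box n e)) Y),
           sq_comm f a b' -> cmap (Prod (Rep k.+1) (Rep n.+1)) Y;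
  fill_box : forall n k e a b' (H : @sq_comm X Y f n k e a b'),
      eqm (compm (fill H) (prodmap (idm (Rep k.+1)) (boxincl n e))) b';
  fill_lift : forall n k e a b' (H : @sq_comm X Y f n k e a b'),
      eqm (compm f (fill H)) a;
  fill_unif : forall n k e a b' (H : @sq_comm X Y f n k e a b')
      j (al : cmap (Rep j.+1) (Rep k.+1)),
      eqm (compm (fill H) (prodmap al (idm (Rep n.+1))))
          (fill (sq_comm_pre al H))
}.

Definition ukan_complex (A : cset) := ukan_fib (toTerm A).

(* A path w : I^m x I -> A is contracted onto the constant path at its source:
   filling in A the open box of I^2 which is w(s) on {t = 1} and w(0) on
   {s = 0} u {t = 0}, and transposing, gives a homotopy in A^I from r(w(0)) to w.
   Lifting that homotopy along pi from b(w(0)) and taking its end point gives j(w).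
   Uniformity of both fillers in the parameter cube makes j natural; the parameter
   cube is I^(m+1) rather than I^m because fillers only take parameters I^k with
   k >= 1, and the extra coordinate is set to 0 at the end. *)

From mathcomp Require Import all_boot zify.
From Stdlib Require Import ProofIrrelevance.
Set Implicit Arguments. Unset Strict Implicit. Unset Printing Implicit Defensive.

Lemma compBE n m p (g : Bmor m p) (f : Bmor n m) k :
  sval (compB g f) k = sval g (sval f k).
Proof. by rewrite ffunE. Qed.

Lemma idBE n (k : 'I_n.+2) : sval (idB n) k = k.
Proof. by rewrite ffunE. Qed.

Lemma Bmor_bot n m (f : Bmor n m) : sval f ord0 = ord0.
Proof. by case: f => g /= /andP[/eqP]. Qed.

Lemma Bmor_top n m (f : Bmor n m) : sval f ord_max = ord_max.
Proof. by case: f => g /= /andP[_ /eqP]. Qed.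

Lemma ord2_cases n (k : 'I_n.+2) : [\/ k = ord0, k = ord_max | 0 < k < n.+1].
Proof.
case: (posnP k) => [k0|k_gt0]; first by constructor 1; apply: val_inj.
case: (ltnP k n.+1) => [k_lt|k_ge]; first by constructor 3; apply/andP.
by constructor 2; apply: val_inj => /=; have := ltn_ord k; lia.
Qed.

Lemma Bmor_interior_ext n m (f g : Bmor n m) :
  (forall k : 'I_n.+2, 0 < k < n.+1 -> sval f k = sval g k) -> f = g.
Proof.
move=> fg; apply/val_inj/ffunP => k.
by case: (ord2_cases k) => [->|->|/fg//]; rewrite ?Bmor_bot ?Bmor_top.
Qed.

Definition mkF n m (F : nat -> nat) : {ffun 'I_n.+2 -> 'I_m.+2} :=
  [ffun k : 'I_n.+2 => if (k : nat) == 0 then ord0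
                       else if (k : nat) == n.+1 then ord_max else inord (F k)].

Lemma mkF_Bprop n m F : Bprop (@mkF n m F).
Proof. by rewrite /Bprop !ffunE /= eqxx. Qed.

(* Only the values of [F] at [x_1, ..., x_n] are used; values outside ['I_m.+2]
   become [bot] through [inord]. *)
Definition mkB n m F : Bmor n m := exist (@Bprop n m) _ (@mkF_Bprop n m F).

Lemma mkB_interior n m F (k : 'I_n.+2) :
  0 < k < n.+1 -> sval (@mkB n m F) k = inord (F k).
Proof. by rewrite ffunE => /andP[k_gt0 k_lt]; rewrite gtn_eqF // ltn_eqF. Qed.

Lemma mkB_x1 n m F : sval (@mkB n.+1 m F) (inord 1) = inord (F 1).
Proof. by rewrite mkB_interior inordK. Qed.

Lemma Bmor1_ext q (u v : Bmor 1 q) : sval u (inord 1) = sval v (inord 1) -> u = v.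
Proof.
move=> uv; apply: Bmor_interior_ext => k /andP[k_gt0 k_lt].
by have -> : k = inord 1 by apply: val_inj; rewrite /= inordK //; lia.
Qed.

(* A B-map [[n] -> [m]] is a cube map [I^m -> I^n]: [endB q d] is the constant map
   [I^q -> I] with value [d], [proj1B] and [proj2B] are the projections
   [I^2 -> I], and [pairB t s : I^q -> I^2] pairs [t] and [s]. *)
Definition endB q (d : bool) : Bmor 1 q := mkB 1 q (fun _ => if d then q.+1 else 0).

Lemma endB_x1 q d : sval (endB q d) (inord 1) = if d then ord_max else ord0.
Proof. by rewrite mkB_x1; case: d; apply: val_inj; rewrite /= inordK. Qed.

Lemma endB_nat q q' (g : Bmor q q') d : compB g (endB q d) = endB q' d.
Proof.
by apply: Bmor1_ext; rewrite compBE !endB_x1; case: d; rewrite ?Bmor_top ?Bmor_bot.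
Qed.

Lemma endB_inj q : injective (endB q).
Proof.
move=> d d' /(congr1 (fun u : Bmor 1 q => val (sval u (inord 1)))).
by rewrite !endB_x1; case: d; case: d'.
Qed.

Definition proj1B : Bmor 1 2 := mkB 1 2 id.
Definition proj2B : Bmor 1 2 := mkB 1 2 (fun _ => 2).

Definition pairB q (t s : Bmor 1 q) : Bmor 2 q :=
  mkB 2 q (fun k => if k == 1 then sval t (inord 1) else sval s (inord 1)).

Lemma pairB_proj1 q (t s : Bmor 1 q) : compB (pairB t s) proj1B = t.
Proof. by apply: Bmor1_ext; rewrite compBE !mkB_x1 inord_val. Qed.

Lemma pairB_proj2 q (t s : Bmor 1 q) : compB (pairB t s) proj2B = s.
Proof. by apply: Bmor1_ext; rewrite compBE mkB_x1 mkB_interior ?inordK //= inord_val. Qed.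

Lemma pairB_nat q q' (g : Bmor q q') (t s : Bmor 1 q) :
  compB g (pairB t s) = pairB (compB g t) (compB g s).
Proof.
apply: Bmor_interior_ext => k k_int; rewrite compBE !mkB_interior //.
by case: ifP; rewrite compBE !inord_val.
Qed.

Lemma faceB_dim1 d : faceB (ord0 : 'I_1) d = endB 0 d.
Proof. by apply: Bmor1_ext; rewrite endB_x1 ffunE inordK. Qed.

Lemma faceB_dim2_first d : faceB (ord0 : 'I_2) d = pairB (endB 1 d) (idB 1).
Proof.
apply: Bmor_interior_ext => k k_int; rewrite mkB_interior // endB_x1 idBE ffunE.
by case: k k_int => -[|[|[|k]]] //= _ _; case: d; apply: val_inj; rewrite /= !inordK.
Qed.

Lemma faceB_dim2_last d : faceB (ord_max : 'I_2) d = pairB (idB 1) (endB 1 d).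
Proof.
apply: Bmor_interior_ext => k k_int; rewrite mkB_interior // endB_x1 idBE ffunE.
by case: k k_int => -[|[|[|k]]] //= _ _; case: d; apply: val_inj; rewrite /= !inordK.
Qed.

(* [inclB m : [m] -> [m+1]] is the projection [I^(m+1) -> I^m] forgetting the last
   coordinate, [faceB_last0 m] the face [I^m -> I^(m+1)] inserting [0] there, and
   [extB g] the map [g^* x 1 : I^(m'+1) -> I^(m+1)]. *)
Definition inclB m : Bmor m m.+1 := mkB m m.+1 id.
Definition faceB_last0 m : Bmor m.+1 m := faceB (ord_max : 'I_m.+1) false.
Definition extB m m' (g : Bmor m m') : Bmor m.+1 m'.+1 :=
  mkB m.+1 m'.+1
    (fun k => if k == m.+1 then m'.+1 else sval (compB (inclB m') g) (inord k)).

Lemma faceB_last0_inclB m : compB (faceB_last0 m) (inclB m) = idB m.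
Proof.
apply: Bmor_interior_ext => k /andP[k_gt0 k_lt].
rewrite compBE idBE mkB_interior ?k_gt0 // ffunE inordK; last lia.
by rewrite ltn_eqF // k_lt inord_val.
Qed.

Lemma extB_inclB m m' (g : Bmor m m') : compB (extB g) (inclB m) = compB (inclB m') g.
Proof.
apply: Bmor_interior_ext => k /andP[k_gt0 k_lt].
rewrite compBE mkB_interior ?k_gt0 // mkB_interior ?inordK; try lia.
by rewrite ltn_eqF // inord_val inord_val.
Qed.

Lemma faceB_last0_interior m (k : 'I_m.+3) :
  0 < k < m.+1 -> sval (faceB_last0 m) k = inord k.
Proof. by move=> /andP[_ k_lt]; rewrite ffunE ltn_eqF // k_lt. Qed.

Lemma faceB_last0_last m : sval (faceB_last0 m) (inord m.+1) = ord0.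
Proof. by rewrite ffunE inordK // eqxx. Qed.

Lemma extB_interior m m' (g : Bmor m m') (k : 'I_m.+3) :
  0 < k < m.+1 -> sval (extB g) k = sval (inclB m') (sval g (inord k)).
Proof.
move=> /andP[k_gt0 k_lt]; rewrite mkB_interior ?k_gt0 ?ltn_eqF //; last lia.
by rewrite compBE inord_val.
Qed.

Lemma extB_last m m' (g : Bmor m m') : sval (extB g) (inord m.+1) = inord m'.+1.
Proof. by rewrite mkB_interior ?inordK //= eqxx. Qed.

Lemma faceB_last0_extB m m' (g : Bmor m m') :
  compB g (faceB_last0 m) = compB (faceB_last0 m') (extB g).
Proof.
apply: Bmor_interior_ext => k /andP[k_gt0 k_lt]; rewrite !compBE.
have [km|km] := eqVneq (k : nat) m.+1.
  have -> : k = inord m.+1 by apply: val_inj; rewrite /= inordK.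
  by rewrite extB_last !faceB_last0_last Bmor_bot.
have k_int : 0 < k < m.+1 by rewrite k_gt0 ltn_neqAle km -ltnS.
rewrite faceB_last0_interior // extB_interior //.
by rewrite -compBE faceB_last0_inclB idBE.
Qed.

Lemma boxb_pairB_end q (t : Bmor 1 q) d : boxb true (pairB t (endB q d)).
Proof.
apply/existsP; exists ord_max; apply/existsP; exists d; apply/andP; split=> //.
apply/existsP; exists t; apply/eqP.
by rewrite faceB_dim2_last pairB_nat compB_id_r endB_nat.
Qed.

Lemma boxb_dim2P p (f : Bmor 2 p) : boxb true f ->
  compB f proj1B = endB p false \/ exists d, compB f proj2B = endB p d.
Proof.
case/existsP=> j /existsP[d /andP[jd /existsP[h /eqP->]]].
have [j0|jmax] : j = ord0 \/ j = ord_max.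
  by case: j {jd} => -[|[|j]] //= lt_j; [left|right]; apply: val_inj.
- subst j; case: d jd => // _.
  by left; rewrite faceB_dim2_first pairB_nat pairB_proj1 endB_nat.
- by right; exists d; rewrite jmax faceB_dim2_last pairB_nat pairB_proj2 endB_nat.
Qed.

Lemma boxb_dim1P p (f : Bmor 1 p) : boxb true f -> f = endB p false.
Proof.
case/existsP=> j /existsP[d /andP[jd /existsP[h /eqP->]]].
have j0 : j = ord0 by apply: val_inj; case: j {jd} => -[].
by subst j; case: d jd => // _; rewrite faceB_dim1 endB_nat.
Qed.

(* On the open box [{s = 0} u {t = 0} u {t = 1}] of [I^2] with coordinates
   [(s, t)]: [s] on [t = 1], and [0] elsewhere. *)
Definition sel p (f : Bmor 2 p) : Bmor 1 p :=
  if compB f proj2B == endB p true then compB f proj1B else endB p false.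

Lemma sel_pairB_end q (t : Bmor 1 q) d :
  sel (pairB t (endB q d)) = if d then t else endB q false.
Proof. by rewrite /sel pairB_proj2 pairB_proj1 (inj_eq (@endB_inj q)); case: d. Qed.

Lemma sel_nat p p' (g : Bmor p p') (f : Bmor 2 p) : boxb true f ->
  compB g (sel f) = sel (compB g f).
Proof.
move=> f_box; rewrite /sel -!compB_assoc.
have [->|f2_top] := eqVneq (compB f proj2B) (endB p true).
  by rewrite endB_nat eqxx.
rewrite endB_nat; case: eqP => // gf2_top.
case: (boxb_dim2P f_box) => [->|[[] f2]]; first by rewrite endB_nat.
- by rewrite f2 eqxx in f2_top.
- by move: gf2_top; rewrite f2 endB_nat => /endB_inj.
Qed.

Lemma fill_congr X Y (f : cmap Y X) (K : ukan_fib f) n k e a1 a2 b1 b2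
    (H1 : @sq_comm X Y f n k e a1 b1) (H2 : @sq_comm X Y f n k e a2 b2) :
  a1 = a2 -> b1 = b2 -> fill K H1 = fill K H2.
Proof. by move=> a12 b12; subst; rewrite (proof_irrelevance _ H1 H2). Qed.

Section Transpose.

Variables (A : cset) (k : nat) (F : cmap (Prod (Rep k) (Rep 2)) A).

Definition transposeI_fun p (x : Bmor k p) (u : Bmor 1 p) q
    (y : ob (Prod (Rep p) Int) q) : ob A q :=
  F q (compB y.1 x, pairB y.2 (compB y.1 u)).

Lemma transposeI_fun_nat p x u q q' (g : Bmor q q') y :
  @transposeI_fun p x u q' (act g y) = act g (transposeI_fun x u y).
Proof. by rewrite /transposeI_fun -cnat /= pairB_nat !compB_assoc. Qed.

Definition transposeI_path p (x : Bmor k p) (u : Bmor 1 p) : ob (Exp A) p :=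
  CMap (@transposeI_fun_nat p x u).

Lemma transposeI_path_nat p p' (g : Bmor p p') (x : ob (Prod (Rep k) Int) p) :
  transposeI_path (act g x).1 (act g x).2 = act g (transposeI_path x.1 x.2).
Proof. by apply: cmap_ext => q [h t]; rewrite /= /transposeI_fun /= !compB_assoc. Qed.

Definition transposeI : cmap (Prod (Rep k) Int) (Exp A) :=
  CMap transposeI_path_nat.

End Transpose.

Section PathLifting.

Variables (A B : cset) (KA : ukan_complex A).
Variables (pi : cmap B (Exp A)) (Kpi : ukan_fib pi).
Variables (b : cmap A B) (hb : eqm (compm pi b) (r A)).

Definition contr_box_fun m (w : ob (Exp A) m) p
    (x : ob (Prod (Rep m.+1) (Box 1 true)) p) : ob A p :=
  w p (compB x.1 (inclB m), sel (sval x.2)).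

Lemma contr_box_fun_nat m (w : ob (Exp A) m) p p' (g : Bmor p p') x :
  contr_box_fun w (act g x) = act g (contr_box_fun w x).
Proof.
case: x => y [f f_box]; rewrite /contr_box_fun -cnat /=.
by rewrite compB_assoc sel_nat.
Qed.

Definition contr_box m (w : ob (Exp A) m) : cmap (Prod (Rep m.+1) (Box 1 true)) A :=
  CMap (@contr_box_fun_nat m w).

Lemma contr_box_comm m (w : ob (Exp A) m) :
  sq_comm (toTerm A) (toTerm _) (contr_box w).
Proof. by []. Qed.

Definition contr_fill m (w : ob (Exp A) m) : cmap (Prod (Rep m.+1) (Rep 2)) A :=
  fill KA (contr_box_comm w).

Lemma contr_fill_end m (w : ob (Exp A) m) q (x : Bmor m.+1 q) (t : Bmor 1 q) d :
  contr_fill w q (x, pairB t (endB q d)) =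
  w q (compB x (inclB m), if d then t else endB q false).
Proof.
pose z : ob (Box 1 true) q := exist (@boxb 1 true q) _ (boxb_pairB_end t d).
have /= -> := fill_box KA (contr_box_comm w) (x, z).
by rewrite /contr_box_fun /= sel_pairB_end.
Qed.

Lemma contr_fill_nat m m' (g : Bmor m m') (w : ob (Exp A) m) q y z :
  contr_fill w q (compB y (extB g), z) = contr_fill (act g w) q (y, z).
Proof.
have /= -> := fill_unif KA (contr_box_comm w) (precomp (extB g)) (y, z).
congr (@cf (Prod (Rep m'.+1) (Rep 2)) A _ q (y, z)).
apply: fill_congr; first exact: cmap_ext.
by apply: cmap_ext => p [y' f]; rewrite /= /contr_box_fun /= -!compB_assoc extB_inclB.
Qed.

Definition lift_box_fun m (w : ob (Exp A) m) p
    (x : ob (Prod (Rep m.+1) (Box 0 true)) p) : ob B p :=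
  b p (w p (compB x.1 (inclB m), sval x.2)).

Lemma lift_box_fun_nat m (w : ob (Exp A) m) p p' (g : Bmor p p') x :
  lift_box_fun w (act g x) = act g (lift_box_fun w x).
Proof. by rewrite /lift_box_fun -!cnat /= compB_assoc. Qed.

Definition lift_box m (w : ob (Exp A) m) : cmap (Prod (Rep m.+1) (Box 0 true)) B :=
  CMap (@lift_box_fun_nat m w).

Lemma lift_box_comm m (w : ob (Exp A) m) :
  sq_comm pi (transposeI (contr_fill w)) (lift_box w).
Proof.
move=> p [x [f f_box]]; rewrite /= /lift_box_fun /= (boxb_dim1P f_box).
have /= -> := hb (w p (compB x (inclB m), endB p false)).
apply: cmap_ext => q [h t] /=.
by rewrite /transposeI_fun /= endB_nat contr_fill_end -cnat /= compB_assoc endB_nat.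
Qed.

Definition lift_fill m (w : ob (Exp A) m) : cmap (Prod (Rep m.+1) Int) B :=
  fill Kpi (lift_box_comm w).

Definition section_fun m (w : ob (Exp A) m) : ob B m :=
  lift_fill w m (faceB_last0 m, endB m true).

Lemma section_funK m (w : ob (Exp A) m) : pi m (section_fun w) = w.
Proof.
have /= -> := fill_lift Kpi (lift_box_comm w) (faceB_last0 m, endB m true).
apply: cmap_ext => q [h t] /=.
rewrite /transposeI_fun /= endB_nat contr_fill_end.
by rewrite -compB_assoc faceB_last0_inclB compB_id_r.
Qed.

Lemma section_fun_nat m m' (g : Bmor m m') (w : ob (Exp A) m) :
  section_fun (act g w) = act g (section_fun w).
Proof.
rewrite /section_fun -cnat /= faceB_last0_extB endB_nat.
have /= -> :=
  fill_unif Kpi (lift_box_comm w) (precomp (extB g)) (faceB_last0 m', endB m' true).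
congr (@cf (Prod (Rep m'.+1) Int) B _ m' _); apply: fill_congr.
- apply: cmap_ext => p [y u]; apply: cmap_ext => q [h t].
  by rewrite /= /transposeI_fun /= -contr_fill_nat compB_assoc.
- by apply: cmap_ext => p [y f]; rewrite /= /lift_box_fun /= -!compB_assoc extB_inclB.
Qed.

Definition section_map : cmap (Exp A) B := CMap section_fun_nat.

End PathLifting.

Theorem proposition3p6 (A B : cset) (KA : ukan_complex A)
  (pi : cmap B (Exp A)) (Kpi : ukan_fib pi)
  (b : cmap A B) (hb : eqm (compm pi b) (r A)) :
  exists j : cmap (Exp A) B, eqm (compm pi j) (idm (Exp A)).
Proof. by exists (section_map KA Kpi hb) => m w; apply: section_funK. Qed.
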